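(* There is an absolute constant $c>0$ such that the following holds. Consider sequences of integers $k=k(n)\ge1$, $d=d(n)$, $t=t(n)$ with $d\ge 2k$ and $(d+1)\mid t$, and for each $n$ an average-case $d$-runlength NAGT scheme with $t$ tests for $n$ items and $k$ defectives (with average error probability $o_n(1)$). Then for all sufficiently large $n$, $$t\ge c\,\frac{d\log(n/k)}{\log(d/k)}.$$
   Context: $\log$ denotes the base-2 logarithm. A binary $t\times n$ matrix $M$ is $d$-runlength constrained if in every column, any two $1$'s are separated by a run of at least $d$ zeros, i.e. $M_{ij}=M_{i'j}=1$ with $i<i'$ implies $i'-i\ge d+1$. For $x\in\{0,1\}^n$ the NAGT outcome is $M\odot x=\bigvee_{j:x_j=1}M_{\cdot j}$ (entrywise OR). An average-case $d$-runlength NAGT scheme is a random binary $t\times n$ matrix $\mathsf{M}$, every realization of which is $d$-runlength constrained, together with a deterministic decoder $\mathsf{Dec}$, such that $$\frac{1}{\binom nk}\sum_{x\in\{0,1\}^n:\,\mathsf{wgt}(x)=k}\mathbf P_{\mathsf M}\{\mathsf{Dec}(\mathsf M,\mathsf M\odot x)\ne x\}=o_n(1),$$ where $\mathsf{wgt}$ is Hamming weight. *)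

From Stdlib Require Import Reals.
From mathcomp Require Import all_boot.
Set Implicit Arguments. Unset Strict Implicit. Unset Printing Implicit Defensive.

Definition bmat (t n : nat) := {ffun 'I_t * 'I_n -> bool}.
Definition bvec (m : nat) := {ffun 'I_m -> bool}.

Definition log2 (x : R) : R := Rdiv (ln x) (ln 2).

Definition Rsum (T : finType) (p : pred T) (f : T -> R) : R :=
  foldr Rplus R0 (map f (filter p (enum T))).

(* d-runlength constrained: two 1's in a column are separated by >= d zeros *)
Definition runlength_constrained (d t n : nat) (M : bmat t n) : Prop :=
  forall (i i' : 'I_t) (j : 'I_n),
    M (i, j) -> M (i', j) -> (i < i')%N -> (d.+1 <= i' - i)%N.

Definition wgt (n : nat) (x : bvec n) : nat := #|[pred j | x j]|.

Definition nagt_outcome (t n : nat) (M : bmat t n) (x : bvec n) : bvec t :=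
  [ffun i => [exists j, x j && M (i, j)]].

(* A random t x n matrix = probability mass function on the finite set of
   matrices, every realization (support point) being d-runlength constrained. *)
Definition random_runlength_matrix (d t n : nat) (P : bmat t n -> R) : Prop :=
  (forall M, Rle 0 (P M)) /\
  Rsum predT P = R1 /\
  (forall M, P M <> R0 -> runlength_constrained d M).

Definition avg_error (t n k : nat) (P : bmat t n -> R)
    (Dec : bmat t n -> bvec t -> bvec n) : R :=
  Rmult (Rinv (INR 'C(n, k)))
  (Rsum (fun x : bvec n => wgt x == k)
     (fun x => Rsum predT
        (fun M => if Dec M (nagt_outcome M x) == x then R0 else P M))).

(* Fix a realization M on which more than half of the weight-K inputs are decoded
   correctly; it exists because the average error is below 1/2.  Correct decoding
   makes x |-> M (.) x injective on these inputs, and since every column of M holds at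
   most b = t/(d+1) ones, every outcome has weight at most K b.  Weighting words y of
   length t by z^|y| and comparing with their total weight (1+z)^t gives
   C(n,K)/2 * z^(K b) < (1+z)^t; with z = K/(d+1) this becomes
   ln C(n,K) < ln 2 + K b (1 + ln((d+1)/K)).  As C(n,K) >= (n/K)^K and d/K >= 2, this
   forces ln(n/K) <= 5 b ln(d/K), i.e. t = b(d+1) >= d ln(n/K) / (5 ln(d/K)). *)

From Stdlib Require Import Reals Lra.
From mathcomp Require Import all_boot all_order all_algebra.
From mathcomp Require Import Rstruct zify.
Import Order.TTheory GRing.Theory Num.Theory.
Set Implicit Arguments. Unset Strict Implicit. Unset Printing Implicit Defensive.

(* Compare n^K K! with n^_K K^K factor by factor: n (K - i) <= (n - i) K. *)
Lemma expn_le_bin n K : (K <= n -> n ^ K <= K ^ K * 'C(n, K))%N.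
Proof.
move=> leKn; rewrite -(leq_pmul2r (fact_gt0 K)) -mulnA bin_ffact -ffactnn.
have prod_const m : m ^ K = \prod_(i < K) m by rewrite prod_nat_const card_ord.
rewrite !ffact_prod !prod_const -!big_split /=.
apply: leq_prod => i _; have := ltn_ord i; nia.
Qed.

Lemma bin_gt1 n K : (0 < K < n)%N -> (1 < 'C(n, K))%N.
Proof.
case/andP=> K_gt0 lt_Kn; apply: leq_trans (leq_bin2l K lt_Kn).
by rewrite binSn ltnS.
Qed.

Section Counting.
Local Open Scope ring_scope.

Lemma RsumE (T : finType) (p : pred T) (f : T -> R) : Rsum p f = \sum_(x | p x) f x.
Proof.
rewrite /Rsum -big_filter /index_enum -enumT.
by elim: (filter p (enum T)) => [|a l IH]; rewrite ?big_nil ?big_cons //= IH.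
Qed.

Lemma card_wgt_eq n K : #|[set x : bvec n | wgt x == K]| = 'C(n, K).
Proof.
have supp_inj : injective (fun x : bvec n => [set j | x j]).
  by move=> x x' /setP E; apply/ffunP => j; have := E j; rewrite !inE.
rewrite -(card_imset _ supp_inj) -[n in 'C(n, _)]card_ord -card_draws.
apply: eq_card => B; rewrite inE; apply/imsetP/eqP.
- by case=> x; rewrite inE => /eqP <- ->; apply: eq_card => j; rewrite !inE.
- move=> <-; exists [ffun j => j \in B]; last by apply/setP => j; rewrite !inE ffunE.
  by rewrite inE; apply/eqP/eq_card => j; rewrite !inE ffunE.
Qed.

(* Two ones of a column lie in different blocks [i %/ d.+1] of length [d.+1]. *)
Lemma card_column_le d t n (M : bmat t n) (j : 'I_n) :
  runlength_constrained d M -> (d.+1 %| t)%N ->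
  (#|[pred i : 'I_t | M (i, j)]| <= t %/ d.+1)%N.
Proof.
move=> runM dvd_t; rewrite cardE -(size_map (fun i : 'I_t => i %/ d.+1)%N).
rewrite -[X in (_ <= X)%N](size_iota 0); apply: uniq_leq_size.
- rewrite map_inj_in_uniq ?enum_uniq // => i i'; rewrite !mem_enum !inE => Mi Mi' eq_blk.
  have mod_lt m : (m %% d.+1 < d.+1)%N by rewrite ltn_mod.
  have := divn_eq i d.+1; have := divn_eq i' d.+1; have := mod_lt i; have := mod_lt i'.
  rewrite eq_blk => ? ? def_i' def_i; apply/val_inj.
  have [lt_ii'|lt_i'i|//] := ltngtP i i'.
  + by have := runM _ _ _ Mi Mi' lt_ii'; lia.
  + by have := runM _ _ _ Mi' Mi lt_i'i; lia.
- by move=> _ /mapP[i _ ->]; rewrite mem_iota /= add0n ltn_divLR // divnK.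
Qed.

Lemma wgt_nagt_outcome_le d t n (M : bmat t n) (x : bvec n) :
  runlength_constrained d M -> (d.+1 %| t)%N ->
  (wgt (nagt_outcome M x) <= wgt x * (t %/ d.+1))%N.
Proof.
move=> runM dvd_t; rewrite /wgt -sum1_card -sum_nat_const.
apply: (@leq_trans (\sum_i \sum_(j | x j) (M (i, j) : nat))).
  rewrite big_mkcond /=; apply: leq_sum => i _; rewrite inE ffunE.
  by case: existsP => [[j /andP[xj Mij]]|_] //; rewrite (bigD1 j) //= Mij.
rewrite exchange_big /=; apply: leq_sum => j _.
apply: leq_trans (card_column_le j runM dvd_t).
rewrite -sum1_card [in X in (_ <= X)%N]big_mkcond /=.
by apply: leq_sum => i _; rewrite inE; case: (M (i, j)).
Qed.

Lemma sum_pow_wgt m (z : R) : \sum_(y : bvec m) z ^+ wgt y = (z + 1) ^+ m.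
Proof.
have -> : (z + 1) ^+ m = \prod_(i : 'I_m) \sum_(b : bool) (if b then z else 1).
  by rewrite -[m in LHS]card_ord -prodr_const; apply: eq_bigr => i _; rewrite big_bool.
rewrite bigA_distr_bigA; apply: eq_bigr => y _.
by rewrite /wgt -prodr_const big_mkcond /=; apply: eq_bigr => i _; rewrite inE.
Qed.

Definition decoded t n (M : bmat t n) (Dec : bmat t n -> bvec t -> bvec n) K :=
  [set x : bvec n | (wgt x == K) && (Dec M (nagt_outcome M x) == x)].

Lemma card_decoded_weighted_le d t n (M : bmat t n) Dec K (z : R) :
  runlength_constrained d M -> (d.+1 %| t)%N -> 0 <= z <= 1 ->
  #|decoded M Dec K|%:R * z ^+ (K * (t %/ d.+1)) <= (z + 1) ^+ t.
Proof.
move=> runM dvd_t /andP[z_ge0 z_le1].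
set A := decoded M Dec K.
have out_inj : {in A &, injective (nagt_outcome M)}.
  by move=> x x'; rewrite !inE => /andP[_ /eqP decx] /andP[_ /eqP decx'] eq_out;
    rewrite -decx -decx' eq_out.
rewrite -(card_in_imset out_inj) -sum_pow_wgt mulr_natl -sumr_const.
apply: le_trans (_ : \sum_(y in nagt_outcome M @: A) z ^+ wgt y <= _).
  apply: ler_sum => _ /imsetP[x xA ->]; apply: ler_wiXn2l => //.
  by move: xA; rewrite inE => /andP[/eqP <- _]; apply: wgt_nagt_outcome_le runM dvd_t.
rewrite [leRHS](bigID (mem (nagt_outcome M @: A))) /= lerDl.
by apply: sumr_ge0 => y _; rewrite exprn_ge0.
Qed.

Lemma avg_errorE t n K (P : bmat t n -> R) Dec : (0 < 'C(n, K))%N ->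
  avg_error K P Dec = \sum_M P M * (1 - #|decoded M Dec K|%:R / 'C(n, K)%:R).
Proof.
move=> C_gt0; rewrite /avg_error !RsumE.
under eq_bigr => x _ do rewrite RsumE.
rewrite exchange_big /= RmultE RinvE INRE mulr_sumr; apply: eq_bigr => M _.
rewrite (eq_bigr (fun x => P M - (if Dec M (nagt_outcome M x) == x then P M else 0)));
  last by move=> x _; rewrite -[R0]/(IZR 0) R0E; case: ifP; rewrite ?subrr ?subr0.
rewrite sumrB -big_mkcondr !sumr_const.
have -> : #|(fun x : bvec n => wgt x == K)| = 'C(n, K).
  by rewrite -card_wgt_eq; apply: eq_card => x; rewrite !inE.
have -> : #|(fun x : bvec n => (wgt x == K) && (Dec M (nagt_outcome M x) == x))| =
          #|decoded M Dec K| by apply: eq_card => x; rewrite !inE.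
have C_neq0 : ('C(n, K)%:R : R) != 0 by rewrite pnatr_eq0 -lt0n.
by rewrite -!(mulr_natr (P M)) -mulrBr mulrCA mulrBr mulVf // (mulrC _^-1).
Qed.

Lemma exists_support_lt (T : finType) (P f : T -> R) (c : R) :
  (forall x, 0 <= P x) -> \sum_x P x = 1 -> \sum_x P x * f x < c ->
  exists x, P x != 0 /\ f x < c.
Proof.
move=> P_ge0 P_sum1 mean_lt.
have [/existsP[x /andP[Px_neq0 fx_lt]] | /existsPn no_x] :=
  boolP [exists x, (P x != 0) && (f x < c)]; first by exists x.
suff : c <= \sum_x P x * f x by rewrite leNgt mean_lt.
rewrite -[leLHS]mul1r -P_sum1 mulr_suml; apply: ler_sum => x _.
have := no_x x; case: (eqVneq (P x) 0) => [-> | _ /=]; first by rewrite !mul0r.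
by rewrite -leNgt => le_cf; apply: ler_wpM2l.
Qed.

Lemma exists_decoding_majority d t n K (P : bmat t n -> R) Dec :
  random_runlength_matrix d P -> avg_error K P Dec < 1 / 2 -> (0 < 'C(n, K))%N ->
  exists M, runlength_constrained d M /\ ('C(n, K) < 2 * #|decoded M Dec K|)%N.
Proof.
move=> [P_ge0 [P_sum1 P_supp]] err_lt C_gt0.
have P_ge0' M : 0 <= P M by apply/RleP.
have P_sum1' : \sum_M P M = 1 by rewrite -RsumE P_sum1 -[R1]/(IZR 1) R1E.
rewrite avg_errorE // in err_lt.
have [M [/eqP PM_neq0 half_lt]] := exists_support_lt P_ge0' P_sum1' err_lt.
exists M; split; first exact: P_supp.
have C_pos : 0 < 'C(n, K)%:R :> R by rewrite ltr0n.
move: half_lt; rewrite ltrBlDr -ltrBlDl {1}[1](splitr 1) addrK ltr_pdivlMr //.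
by rewrite mul1r mulrC ltr_pdivrMr ?ltr0n // -natrM ltr_nat mulnC.
Qed.
End Counting.

Local Open Scope R_scope.

Lemma ln_le x y : 0 < x -> x <= y -> ln x <= ln y.
Proof. by move=> x_gt0 [lt_xy | <-]; [left; apply: ln_increasing | right]. Qed.

Lemma ln_div x y : 0 < x -> 0 < y -> ln (x / y) = ln x - ln y.
Proof. by move=> x_gt0 y_gt0; rewrite ln_mult ?ln_Rinv //; apply: Rinv_0_lt_compat. Qed.

(* For [x <= 0] this holds because Stdlib's [ln] returns [0] there. *)
Lemma ln_le_0 x : x <= 1 -> ln x <= 0.
Proof.
move=> x_le1; have [x_gt0 | x_le0] := Rlt_le_dec 0 x.
  by rewrite -ln_1; apply: ln_le.
by rewrite /ln; case: Rlt_dec => [x_gt0 | _]; [case: (Rle_not_lt _ _ x_le0) | right].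
Qed.

Lemma ln_le_of_weighted_count (a z : R) (m e : nat) :
  0 < a -> 0 < z -> a * z ^ m <= (z + 1) ^ e -> ln a <= INR e * z + INR m * ln (/ z).
Proof.
move=> a_gt0 z_gt0 count.
have zm_gt0 := pow_lt _ m z_gt0.
have := ln_le (Rmult_lt_0_compat _ _ a_gt0 zm_gt0) count.
rewrite ln_mult // !ln_pow ?ln_Rinv; try lra.
have : ln (z + 1) <= z.
  by rewrite -{2}(ln_exp z); apply: ln_le; [lra | rewrite Rplus_comm; apply: exp_ineq1_le].
have := pos_INR e; nra.
Qed.

Lemma ln_bin_ge n K :
  (0 < K)%N -> (K <= n)%N -> INR K * ln (INR n / INR K) <= ln (INR 'C(n, K)).
Proof.
move=> K_gt0 le_Kn.
have K_pos : 0 < INR K by apply: lt_0_INR; apply/ssrnat.ltP.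
have n_pos : 0 < INR n by apply: lt_0_INR; apply/ssrnat.ltP; apply: leq_trans le_Kn.
have C_pos : 0 < INR 'C(n, K) by apply: lt_0_INR; apply/ssrnat.ltP; rewrite bin_gt0.
have := le_INR _ _ (elimT ssrnat.leP (expn_le_bin le_Kn)).
rewrite !INRE natrM !natrX -!RpowE -!INRE => /(ln_le (pow_lt _ K n_pos)).
rewrite ln_mult ?ln_div ?ln_pow //; try (apply: pow_lt; lra).
lra.
Qed.

Lemma two_le_div (k dd : R) : 0 < k -> 2 * k <= dd -> 2 <= dd / k.
Proof.
by move=> k_gt0 le_2k_dd; apply: (Rmult_le_reg_r k); rewrite // /Rdiv Rmult_assoc Rinv_l; lra.
Qed.

Lemma ln_tradeoff (k dd b L : R) :
  1 <= k -> 2 * k <= dd -> 1 <= b ->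
  k * L <= ln 2 + k * b * (1 + ln ((dd + 1) / k)) ->
  dd * L <= 5 * ln (dd / k) * (b * (dd + 1)).
Proof.
move=> k_ge1 dd_ge b_ge1 count.
(* With lam = ln (dd/k) >= ln 2 > 1/2, both ln 2 and 1 + ln ((dd+1)/k) are at most
   small multiples of lam; this is where the constant 5 comes from. *)
have ln2_gt := ln_lt_2.
have ratio_ge2 : 2 <= dd / k by apply: two_le_div; lra.
set lam := ln (dd / k) in ratio_ge2 *.
have lam_ge : ln 2 <= lam by apply: ln_le; lra.
have ln_succ : ln ((dd + 1) / k) <= ln 2 + lam.
  rewrite /lam -ln_mult; try lra.
  apply: ln_le; first by apply: Rdiv_lt_0_compat; lra.
  rewrite /Rdiv -Rmult_assoc; apply: Rmult_le_compat_r; first by left; apply: Rinv_0_lt_compat; lra.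
  lra.
have kb_ge1 : 1 <= k * b by nra.
have L_le : L <= 5 * b * lam.
  have : k * L <= k * (5 * b * lam) by nra.
  by move/(Rmult_le_reg_l k); apply; lra.
nra.
Qed.

Lemma scaled_log2_ratio_le (d x y T : R) :
  2 <= y -> d * ln x <= 5 * ln y * T -> 1 / 5 * (d * log2 x) / log2 y <= T.
Proof.
move=> y_ge2 bound; have ln2_gt := ln_lt_2.
have lny_gt : ln 2 <= ln y by apply: ln_le; lra.
rewrite /log2; replace (1 / 5 * (d * (ln x / ln 2)) / (ln y / ln 2)) with
  (d * ln x / (5 * ln y)) by (field; lra).
by apply: (Rmult_le_reg_r (5 * ln y)); [lra | rewrite /Rdiv Rmult_assoc Rinv_l; lra].
Qed.

Lemma ln_card_decoded_le d t n (M : bmat t n) Dec K :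
  runlength_constrained d M -> (d.+1 %| t)%N -> (0 < K <= d.+1)%N ->
  (0 < #|decoded M Dec K|)%N ->
  ln (INR #|decoded M Dec K|) <= INR K * INR (t %/ d.+1) * (1 + ln ((INR d + 1) / INR K)).
Proof.
move=> runM dvd_t /andP[K_gt0 le_K_d1] A_gt0.
have K_pos : 0 < INR K by apply: lt_0_INR; apply/ssrnat.ltP.
have d1_pos : 0 < INR d + 1 by have := pos_INR d; lra.
(* z = K/(d+1) minimizes e z + m ln (1/z) for e = b(d+1) and m = K b. *)
set z := INR K / (INR d + 1).
have z_pos : 0 < z by apply: Rdiv_lt_0_compat.
have z_le1 : z <= 1.
  apply: (Rmult_le_reg_r (INR d + 1)) => //; rewrite /z /Rdiv Rmult_assoc Rinv_l; last lra.
  by rewrite Rmult_1_r Rmult_1_l -S_INR; apply: le_INR; apply/ssrnat.leP.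
have count : INR #|decoded M Dec K| * z ^ (K * (t %/ d.+1)) <= (z + 1) ^ t.
  apply/RleP; rewrite INRE !RpowE; apply: card_decoded_weighted_le runM dvd_t _.
  by apply/andP; split; apply/RleP; [exact: Rlt_le z_pos | exact: z_le1].
have A_pos : 0 < INR #|decoded M Dec K| by apply: lt_0_INR; apply/ssrnat.ltP.
have := ln_le_of_weighted_count A_pos z_pos count.
have -> : INR t * z = INR K * INR (t %/ d.+1).
  by rewrite /z -{1}(divnK dvd_t) mult_INR S_INR; field; lra.
by rewrite /z Rinv_div mult_INR; lra.
Qed.

Lemma ln_bin_lt_of_decoder d t n K (P : bmat t n -> R) Dec :
  (0 < K <= d.+1)%N -> (K <= n)%N -> (d.+1 %| t)%N -> random_runlength_matrix d P ->
  avg_error K P Dec < 1 / 2 ->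
  ln (INR 'C(n, K)) < ln 2 + INR K * INR (t %/ d.+1) * (1 + ln ((INR d + 1) / INR K)).
Proof.
move=> le_K_d1 le_Kn dvd_t randP err_lt.
have C_gt0 : (0 < 'C(n, K))%N by rewrite bin_gt0.
have err_lt' : (avg_error K P Dec < 1 / 2)%R by apply/RltP.
have [M [runM majority]] := exists_decoding_majority randP err_lt' C_gt0.
have A_gt0 : (0 < #|decoded M Dec K|)%N by lia.
apply: Rlt_le_trans (_ : _ < ln 2 + ln (INR #|decoded M Dec K|)) _.
  rewrite -ln_mult; [| lra | by apply: lt_0_INR; apply/ssrnat.ltP].
  apply: ln_increasing; first by apply: lt_0_INR; apply/ssrnat.ltP.
  by rewrite -[2]/(INR 2) -mult_INR; apply: lt_INR; apply/ssrnat.ltP.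
by apply: Rplus_le_compat_l; apply: ln_card_decoded_le.
Qed.

Lemma nagt_lower_bound d t n K (P : bmat t n -> R) Dec :
  (0 < K)%N -> (2 * K <= d)%N -> (d.+1 %| t)%N -> random_runlength_matrix d P ->
  avg_error K P Dec < 1 / 2 ->
  1 / 5 * (INR d * log2 (INR n / INR K)) / log2 (INR d / INR K) <= INR t.
Proof.
move=> K_gt0 le_2K_d dvd_t randP err_lt.
have K_pos : 0 < INR K by apply: lt_0_INR; apply/ssrnat.ltP.
have d_ge : 2 * INR K <= INR d.
  by rewrite -[2]/(INR 2) -mult_INR; apply: le_INR; apply/ssrnat.leP.
have ratio_ge2 := two_le_div K_pos d_ge.
apply: scaled_log2_ratio_le => //.
have ln_ratio_ge : ln 2 <= ln (INR d / INR K) by apply: ln_le; lra.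
have [le_nK | lt_Kn] := leqP n K.
  have : ln (INR n / INR K) <= 0.
    apply: ln_le_0; apply: (Rmult_le_reg_r (INR K)) => //.
    rewrite /Rdiv Rmult_assoc Rinv_l ?Rmult_1_l ?Rmult_1_r; last lra.
    by apply: le_INR; apply/ssrnat.leP.
  have := ln_lt_2; have := pos_INR t; have := pos_INR d; nra.
have le_K_d1 : (0 < K <= d.+1)%N by rewrite K_gt0; lia.
have := ln_bin_lt_of_decoder le_K_d1 (ltnW lt_Kn) dvd_t randP err_lt.
have C_ge2 : 2 <= INR 'C(n, K).
  by rewrite -[2]/(INR 2); apply: le_INR; apply/ssrnat.leP; apply: bin_gt1; rewrite K_gt0.
have ln_C := ln_bin_ge K_gt0 (ltnW lt_Kn).
set b := (t %/ d.+1)%N; rewrite -(divnK dvd_t) -/b mult_INR S_INR.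
have [b0 | b_gt0] := posnP b.
  (* With no tests at most one input is decoded, but C(n,K) >= 2. *)
  rewrite b0 /= Rmult_0_r Rmult_0_l Rplus_0_r => ln_lt; suff : INR 'C(n, K) < 2 by lra.
  by apply: ln_lt_inv => //; lra.
have b_ge1 : 1 <= INR b by apply: (le_INR 1); apply/ssrnat.leP.
move=> core; apply: ln_tradeoff => //; first by apply: (le_INR 1); apply/ssrnat.leP.
lra.
Qed.

Theorem theorem4 :
  exists c : R, Rlt 0 c /\
  forall (k d t : nat -> nat)
         (P : forall n : nat, bmat (t n) n -> R)
         (Dec : forall n : nat, bmat (t n) n -> bvec (t n) -> bvec n),
    (forall n, 1 <= k n)%N ->
    (forall n, 2 * k n <= d n)%N ->
    (forall n, (d n).+1 %| t n)%N ->
    (forall n, random_runlength_matrix (d n) (P n)) ->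
    Un_cv (fun n => avg_error (k n) (P n) (Dec n)) R0 ->
    exists N : nat, forall n : nat, (N <= n)%N ->
      Rle (Rdiv (Rmult c (Rmult (INR (d n)) (log2 (Rdiv (INR n) (INR (k n))))))
                (log2 (Rdiv (INR (d n)) (INR (k n)))))
          (INR (t n)).
Proof.
exists (1 / 5); split; first lra.
move=> k d t P Dec k_gt0 le_2k_d dvd_t randP err_cvg.
have [N N_err] := err_cvg (1 / 2) ltac:(lra).
exists N => n le_Nn; apply: nagt_lower_bound => //.
have := N_err n (elimT ssrnat.leP le_Nn); rewrite /R_dist Rminus_0_r.
exact: Rle_lt_trans _ _ _ (Rle_abs _).
Qed.
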